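(* Let $\xi$ be a quadratic irrational real number and let $n\ge1$ be an integer. There is a constant $c>0$, depending only on $\xi$ and $n$, such that for every algebraic integer $\alpha$ of degree $n+1$ whose conjugates $\alpha_1,\dots,\alpha_{n+1}$ are all distinct from $\xi$, and for every ordering of these conjugates, one has \[ \max_{1\le i\le n} |\xi-\alpha_i| \ge c\, H(\alpha)^{-2/n}. \]
   Context: The height $H(\alpha)$ of an algebraic number $\alpha\in\mathbb{C}$ is the largest absolute value of the coefficients of its irreducible (minimal) polynomial in $\mathbb{Z}[T]$. The conjugates of $\alpha$ are the roots of this polynomial. An algebraic integer is a root of a monic polynomial in $\mathbb{Z}[T]$. *)

From HB Require Import structures.
From mathcomp Require Import all_boot all_order all_algebra all_field.
Set Implicit Arguments. Unset Strict Implicit. Unset Printing Implicit Defensive.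
Import Order.TTheory GRing.Theory Num.Theory.
Local Open Scope ring_scope.

Definition quadratic_irrational (xi : algC) : Prop :=
  xi \is Num.real /\
  exists q : {poly rat}, size q = 3%N /\ irreducible_poly q /\
                         root (map_poly ratr q) xi.

Definition height (p : {poly int}) : nat := (\max_(i < size p) absz (nth 0%R p i))%N.

(* p is the minimal polynomial (in Z[T]) of the algebraic integer alpha:
   p is monic, irreducible (over Q, equivalently over Z for monic p),
   and alpha is a root of p. *)
Definition min_poly_alg_int (alpha : algC) (p : {poly int}) : Prop :=
  p \is monic /\ irreducible_poly (map_poly intr p : {poly rat}) /\
  root (map_poly intr p) alpha.

From HB Require Import structures.
From mathcomp Require Import all_boot all_order all_algebra all_field.
From mathcomp Require Import ring.
Import Order.TTheory GRing.Theory Num.Theory.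
Local Open Scope ring_scope.
Set Implicit Arguments. Unset Strict Implicit. Unset Printing Implicit Defensive.

(* A Liouville-type argument.  Write xi^2 = S xi - Pr with S, Pr rational and
   let xi' = S - xi be the algebraic conjugate of xi; A is a nonzero integer
   clearing the denominators of S and Pr.  For a monic integer polynomial
   P = prod_(x <- s) (X - x) which does not vanish at xi, the number
     N = prod_(x <- s) A (xi - x) (xi' - x) = A^(deg P) P(xi) P(xi')
   is an algebraic integer (each factor equals A (x^2 - S x + Pr)), is
   rational (P(xi) P(xi') is a norm from Q(xi) to Q) and is nonzero, so
   |N| >= 1.  If the first n conjugates lie within delta <= 1 of xi, each of
   the n corresponding factors is at most C delta, while the last conjugate,
   controlled through the trace -P_n = sum of the conjugates, contributes a
   factor at most C H^2 (H the height).  Hence 1 <= C^(n+1) delta^n H^2,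
   that is delta >= C^-(n+1) H^(-2/n). *)

Definition quad_root (S Pr z : algC) : Prop := z ^+ 2 = S * z - Pr.

Lemma denq_ratr_int (r : rat) : ((denq r)%:~R * ratr r : algC) \is a Num.int.
Proof.
have -> : ((denq r)%:~R : algC) = ratr (denq r)%:~R by rewrite ratr_int.
by rewrite -rmorphM mulrC -numqE rmorph_int rpred_int.
Qed.

Lemma quadratic_irrational_equation (xi : algC) : quadratic_irrational xi ->
  exists S Pr A : algC,
    [/\ S \in Crat, Pr \in Crat, quad_root S Pr xi & xi \notin Crat] /\
    [/\ A \is a Num.int, A != 0, A * S \is a Num.int & A * Pr \is a Num.int].
Proof.
case=> _ [q [size_q [irr_q root_q]]].
have q2_neq0 : q`_2 != 0.
  by rewrite -[2%N]/(3.-1)%N -size_q -lead_coefE lead_coef_eq0 -size_poly_eq0 size_q.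
pose sr := - (q`_1 / q`_2); pose pr := q`_0 / q`_2.
exists (ratr sr), (ratr pr), ((denq sr * denq pr)%:~R); split; split.
- exact: Crat_rat.
- exact: Crat_rat.
- have : (map_poly ratr q).[xi] = 0 :> algC by apply/eqP.
  rewrite horner_coef size_map_poly size_q !big_ord_recl big_ord0 !coef_map /=.
  set c0 : algC := ratr q`_0; set c1 : algC := ratr q`_1.
  set c2 : algC := ratr q`_2 => eq_q.
  have c2_neq0 : c2 != 0 by rewrite fmorph_eq0.
  have -> : ratr sr = - (c1 / c2) by rewrite rmorphN fmorph_div.
  have -> : ratr pr = c0 / c2 by rewrite fmorph_div.
  apply: (mulfI c2_neq0); rewrite /quad_root -[RHS]addr0 -eq_q.
  rewrite -[bump 0 0]/1%N -[bump 0 1]/2%N.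
  by field; rewrite fmorph_eq0.
- apply/negP => /CratP [r xi_r].
  move: root_q; rewrite xi_r fmorph_root => root_r.
  have [_ /(_ ('X - r%:P))] := irr_q.
  rewrite size_XsubC dvdp_XsubCl root_r => /(_ isT isT) /eqp_size.
  by rewrite size_XsubC size_q.
- exact: rpred_int.
- by rewrite intr_eq0 mulf_neq0 ?denq_neq0.
- by rewrite intrM mulrAC rpredM ?rpred_int ?denq_ratr_int.
- by rewrite intrM -mulrA rpredM ?rpred_int ?denq_ratr_int.
Qed.

Section QuadraticNorm.

Variables S Pr : algC.
Hypotheses (S_rat : S \in Crat) (Pr_rat : Pr \in Crat).

Lemma quad_root_conj (z : algC) : quad_root S Pr z -> quad_root S Pr (S - z).
Proof. by rewrite /quad_root => z2; rewrite sqrrB z2; ring. Qed.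

Lemma quad_root_mul_conj (z : algC) : quad_root S Pr z -> z * (S - z) = Pr.
Proof. by rewrite /quad_root => z2; rewrite mulrBr -expr2 z2; ring. Qed.

Lemma quad_norm_factor (xi x : algC) : quad_root S Pr xi ->
  (xi - x) * ((S - xi) - x) = x ^+ 2 - S * x + Pr.
Proof. by move/quad_root_mul_conj => <-; ring. Qed.

(* Modulo X^2 - S X + Pr every rational polynomial reduces to a rational
   linear one: its values at both roots are u + v z for the same u, v. *)
Lemma horner_quad_linear (P : {poly algC}) : P \is a polyOver Crat ->
  exists u v, [/\ u \in Crat, v \in Crat &
    forall z, quad_root S Pr z -> P.[z] = u + v * z].
Proof.
suff Poly_linear cs : all (mem Crat) cs -> exists u v, [/\ u \in Crat, v \in Crat &
    forall z, quad_root S Pr z -> (Poly cs).[z] = u + v * z].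
  by move=> P_rat; rewrite -[P]polyseqK; apply: Poly_linear.
elim: cs => [_ | c cs IH /= /andP [c_rat /IH [u [v [u_rat v_rat Puv]]]]].
  by exists 0, 0; split=> // z _; rewrite horner0 mul0r addr0.
exists (c - v * Pr), (u + v * S); split; rewrite ?rpredB ?rpredD ?rpredM //.
move=> z z2; rewrite horner_cons Puv // mulrDl -mulrA -expr2 z2; ring.
Qed.

Lemma horner_norm_rat (P : {poly algC}) (xi : algC) :
  P \is a polyOver Crat -> quad_root S Pr xi -> P.[xi] * P.[S - xi] \in Crat.
Proof.
move=> /horner_quad_linear [u [v [u_rat v_rat Puv]]] xi2.
rewrite (Puv _ xi2) (Puv _ (quad_root_conj xi2)).
have -> : (u + v * xi) * (u + v * (S - xi)) = u * (u + v * S) + v * v * (xi * (S - xi)).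
  by ring.
by rewrite quad_root_mul_conj // rpredD ?rpredM ?rpredD ?rpredM.
Qed.

Lemma horner_conj_neq0 (P : {poly algC}) (xi : algC) :
  P \is a polyOver Crat -> quad_root S Pr xi -> xi \notin Crat ->
  P.[xi] != 0 -> P.[S - xi] != 0.
Proof.
move=> /horner_quad_linear [u [v [u_rat v_rat Puv]]] xi2 xi_irr.
rewrite (Puv _ xi2) (Puv _ (quad_root_conj xi2)); apply: contraNneq => root_conj.
have [v0 | v_neq0] := eqVneq v 0.
  by move: root_conj; rewrite v0 !mul0r !addr0 => ->.
have conj_val : S - xi = - u / v.
  apply: (mulfI v_neq0); rewrite [RHS]mulrCA divff // mulr1.
  by rewrite -[RHS]add0r -root_conj; ring.
by rewrite -[xi](subKr S) conj_val rpredB ?rpred_div ?rpredN in xi_irr.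
Qed.

Variable A : algC.
Hypotheses (A_int : A \is a Num.int) (A_neq0 : A != 0).
Hypotheses (AS_int : A * S \is a Num.int) (APr_int : A * Pr \is a Num.int).

(* Key arithmetic fact: for a monic integer polynomial with roots s, none
   equal to the irrational root xi, the product of A (xi - x) (xi' - x) over
   the roots is a nonzero rational algebraic integer, hence has modulus at
   least 1. *)
Lemma norm_product_ge1 (xi : algC) (s : seq algC) :
  quad_root S Pr xi -> xi \notin Crat ->
  \prod_(x <- s) ('X - x%:P) \is a polyOver Num.int ->
  all (fun x => x != xi) s ->
  1 <= `|\prod_(x <- s) (A * ((xi - x) * ((S - xi) - x)))|.
Proof.
set P := \prod_(x <- s) _ => xi2 xi_irr P_int s_neq_xi.
have int_rat : {subset Num.int <= Crat} by move=> _ /intrP [m ->]; apply: rpred_int.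
have P_rat : P \is a polyOver Crat := polyOverS int_rat P_int.
have P_at z : P.[z] = \prod_(x <- s) (z - x).
  by rewrite horner_prod; apply: eq_bigr => x _; rewrite hornerXsubC.
have N_norm : \prod_(x <- s) (A * ((xi - x) * ((S - xi) - x)))
              = (\prod_(x <- s) A) * (P.[xi] * P.[S - xi]).
  by rewrite big_split /= big_split /= -!P_at.
have Pxi_neq0 : P.[xi] != 0.
  rewrite P_at prodf_seq_neq0; apply/allP => x x_s /=.
  by rewrite subr_eq0 eq_sym (allP s_neq_xi).
have N_neq0 : (\prod_(x <- s) A) * (P.[xi] * P.[S - xi]) != 0.
  rewrite !mulf_neq0 ?horner_conj_neq0 // prodf_seq_neq0.
  by apply/allP => x _; rewrite A_neq0.
have N_rat : (\prod_(x <- s) A) * (P.[xi] * P.[S - xi]) \in Crat.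
  by rewrite rpredM ?horner_norm_rat // rpred_prod // => x _; apply: int_rat.
have N_aint : \prod_(x <- s) (A * ((xi - x) * ((S - xi) - x))) \in Aint.
  rewrite big_seq rpred_prod // => x x_s; rewrite quad_norm_factor //.
  have x_aint : x \in Aint.
    by apply: (root_monic_Aint _ (monic_prod_XsubC _ _ _) P_int); rewrite root_prod_XsubC.
  have -> : A * (x ^+ 2 - S * x + Pr) = A * x ^+ 2 - (A * S) * x + A * Pr by ring.
  apply: rpredD (Aint_Cint APr_int); apply: rpredB.
    exact: rpredM (Aint_Cint A_int) (rpredX 2 x_aint).
  exact: rpredM (Aint_Cint AS_int) x_aint.
rewrite N_norm norm_intr_ge1 // Cint_rat_Aint // -N_norm //.
Qed.

End QuadraticNorm.

Lemma coef_le_height (p : {poly int}) (i : nat) : (absz (p`_i)%R <= height p)%N.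
Proof.
have [i_small | i_large] := ltnP i (size p).
  exact: (@leq_bigmax _ (fun j : 'I_(size p) => absz (p`_j)%R) (Ordinal i_small)).
by rewrite nth_default.
Qed.

Lemma height_monic_ge1 (p : {poly int}) : p \is monic -> (1 <= height p)%N.
Proof. by move/monicP => lead_p; rewrite -[1%N]/(absz 1) -lead_p coef_le_height. Qed.

Lemma bigmax_nonneg_ub (R : numDomainType) (n : nat) (F : 'I_n -> R) :
  (forall i, 0 <= F i) ->
  0 <= \big[Num.max/0]_(i < n) F i /\ forall i, F i <= \big[Num.max/0]_(i < n) F i.
Proof.
elim: n F => [|n IH] F F_ge0; first by rewrite big_ord0; split=> // [[]].
rewrite big_ord_recl /=; set M := \big[_/_]_(i < n) _.
have [M_ge0 M_ub] := IH (fun i => F (lift ord0 i)) (fun i => F_ge0 _).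
have [le_max_l le_max_r] : F ord0 <= Num.max (F ord0) M /\ M <= Num.max (F ord0) M.
  rewrite maxEle; case: ifP => [F0_le_M | F0_gt_M]; split=> //.
  by rewrite real_leNgt ?ger0_real //; apply: contraFN F0_gt_M => /ltW.
split=> [|i]; first exact: le_trans M_ge0 le_max_r.
by case: (unliftP ord0 i) => [j -> | ->] //; apply: le_trans (M_ub j) le_max_r.
Qed.

(* The last root of a monic polynomial is controlled by the others through
   the trace: if the first n roots lie within 1 of xi, then the distance from
   xi to the last one is bounded by the n-th coefficient. *)
Lemma last_root_dist (xi : algC) (n : nat) (s : seq algC) :
  size s = n.+1 -> (forall i : 'I_n, `|xi - s`_i| <= 1) ->
  `|xi - s`_n| <= `|xi| + n%:R * (`|xi| + 1) + `|(\prod_(x <- s) ('X - x%:P))`_n|.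
Proof.
move=> size_s near_xi; set P := \prod_(x <- s) _.
have trace : P`_n = - \sum_(i < n.+1) s`_i.
  rewrite -[n in P`_n]/(n.+1.-1)%N -size_s coefPn_prod_XsubC ?size_s //.
  by rewrite (big_nth 0) size_s big_mkord.
have last_root : xi - s`_n = xi + (P`_n + \sum_(i < n) s`_i).
  by rewrite trace big_ord_recr /=; ring.
have small_roots : \sum_(i < n) `|s`_i| <= n%:R * (`|xi| + 1).
  have root_le (i : 'I_n) : `|s`_i| <= `|xi| + 1.
    rewrite -[s`_i](subKr xi); apply: le_trans (ler_normB _ _) _.
    by rewrite lerD2l.
  apply: le_trans (ler_sum _ (fun i _ => root_le i)) _.
  by rewrite sumr_const card_ord mulr_natl.
rewrite last_root; apply: le_trans (ler_normD _ _) _.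
rewrite -addrA lerD2l [leRHS]addrC; apply: le_trans (ler_normD _ _) _.
by rewrite lerD2l; apply: le_trans (ler_norm_sum _ _ _) small_roots.
Qed.

(* The effective constant: xi, xi' are the two roots of the quadratic, A the
   common denominator of its coefficients and n + 1 the degree of alpha.
   conj_spread bounds the distances from xi and xi' to every root, measured
   in units of 1 (first n roots) or of H (last root). *)
Definition conj_spread (xi xi' : algC) (n : nat) : algC :=
  `|xi' - xi| + (`|xi| + n%:R * (`|xi| + 1)) + 1.

Definition liouville_const (xi xi' A : algC) (n : nat) : algC :=
  `|A| * conj_spread xi xi' n ^+ 2.

(* Both constants are at least 1, so that they may absorb lower-order terms. *)
Lemma conj_spread_ge1 (xi xi' : algC) (n : nat) : 1 <= conj_spread xi xi' n.
Proof. by rewrite lerDr !addr_ge0 ?mulr_ge0 ?addr_ge0. Qed.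

Lemma liouville_const_ge1 (xi xi' A : algC) (n : nat) :
  1 <= `|A| -> 1 <= liouville_const xi xi' A n.
Proof. by move=> A_ge1; rewrite mulr_ege1 // exprn_ege1 // conj_spread_ge1. Qed.

Section ConjugateFactors.

Variables (xi xi' A : algC) (n : nat) (s : seq algC) (delta H : algC).
Hypotheses (size_s : size s = n.+1) (H_ge1 : 1 <= H).
Hypotheses (near_xi : forall i : 'I_n, `|xi - s`_i| <= delta) (delta_le1 : delta <= 1).
Hypothesis coef_le : `|(\prod_(x <- s) ('X - x%:P))`_n| <= H.

Let d := `|xi' - xi|.
Let B := `|xi| + n%:R * (`|xi| + 1).
Let K := conj_spread xi xi' n.
Let B_ge0 : 0 <= B. Proof. by rewrite !addr_ge0 ?mulr_ge0 ?addr_ge0. Qed.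
Let K_le_sq : K <= K ^+ 2. Proof. exact/ler_eXnr/conj_spread_ge1. Qed.
Let d1_le_K : d + 1 <= K. Proof. by rewrite lerD2r lerDl. Qed.
Let B1_le_K : B + 1 <= K. Proof. by rewrite lerD2r lerDr. Qed.

Lemma near_factor_le (i : 'I_n) :
  `|A| * (`|xi - s`_i| * `|xi' - s`_i|) <= liouville_const xi xi' A n * delta.
Proof.
have conj_le : `|xi' - s`_i| <= K.
  apply: le_trans (ler_distD xi _ _) (le_trans _ d1_le_K).
  by rewrite lerD2l (le_trans (near_xi i)).
rewrite -mulrA ler_wpM2l // mulrC ler_pM ?normr_ge0 ?near_xi //.
exact: le_trans conj_le K_le_sq.
Qed.

Lemma last_factor_le :
  `|A| * (`|xi - s`_n| * `|xi' - s`_n|) <= liouville_const xi xi' A n * H ^+ 2.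
Proof.
have near1 (i : 'I_n) : `|xi - s`_i| <= 1 := le_trans (near_xi i) delta_le1.
have H_ge0 : 0 <= H by apply: le_trans H_ge1.
have last_le : `|xi - s`_n| <= (B + 1) * H.
  apply: le_trans (last_root_dist size_s near1) _.
  by rewrite mulrDl mul1r lerD // ler_peMr.
have conj_le : `|xi' - s`_n| <= K * H.
  apply: le_trans (ler_distD xi _ _) _.
  apply: le_trans (_ : d + (B + 1) * H <= K * H).
    by rewrite lerD2l.
  have K_split : K = d + (B + 1) by rewrite addrA.
  by rewrite K_split [leRHS]mulrDl lerD2r ler_peMr // normr_ge0.
have last_le' : `|xi - s`_n| <= K * H.
  by apply: le_trans last_le _; rewrite ler_wpM2r.
rewrite -mulrA ler_wpM2l // -exprMn expr2.
by apply: ler_pM; rewrite ?normr_ge0.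
Qed.

Lemma conj_product_le :
  `|\prod_(x <- s) (A * ((xi - x) * (xi' - x)))|
    <= liouville_const xi xi' A n ^+ n.+1 * (delta ^+ n * H ^+ 2).
Proof.
set C := liouville_const xi xi' A n.
rewrite normr_prod (big_nth 0) size_s big_mkord big_ord_recr /=.
have -> : C ^+ n.+1 * (delta ^+ n * H ^+ 2) = (C * delta) ^+ n * (C * H ^+ 2).
  by rewrite [(C * delta) ^+ n]exprMn exprSr mulrACA.
apply: ler_pM; rewrite ?prodr_ge0 // ?normrM ?last_factor_le //.
rewrite -[n in _ ^+ n]card_ord -prodr_const; apply: ler_prod => i _.
by rewrite normr_ge0 normrM normrM near_factor_le.
Qed.

End ConjugateFactors.

Lemma root_lower_bound (L delta H : algC) (n : nat) :
  (0 < n)%N -> 1 <= L -> 1 <= H -> 0 <= delta ->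
  (delta <= 1 -> 1 <= L * (delta ^+ n * H ^+ 2)) ->
  L^-1 / n.-root (H ^+ 2) <= delta.
Proof.
move=> n_gt0 L_ge1 H_ge1 delta_ge0 norm_ge1.
have L_gt0 : 0 < L := lt_le_trans ltr01 L_ge1.
have H2_gt0 : 0 < H ^+ 2 by rewrite exprn_gt0 // (lt_le_trans ltr01 H_ge1).
have r_ge1 : 1 <= n.-root (H ^+ 2) by rewrite rootC_ge1 // exprn_ege1.
have r_gt0 : 0 < n.-root (H ^+ 2) := lt_le_trans ltr01 r_ge1.
have Linv_le1 : L^-1 <= 1 by rewrite invf_le1.
have bound_ge0 : 0 <= L^-1 / n.-root (H ^+ 2) by rewrite ltW // divr_gt0 ?invr_gt0.
have [delta_ge1 | delta_lt1] := real_leP (real1 algC) (ger0_real delta_ge0).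
  apply: le_trans delta_ge1; rewrite ler_pdivrMr // mul1r.
  exact: le_trans Linv_le1 r_ge1.
rewrite -(ler_pXn2r n_gt0) ?nnegrE // exprMn !exprVn rootCK // -[L ^- n]exprVn.
apply: le_trans (_ : L^-1 / H ^+ 2 <= _).
  rewrite ler_wpM2r ?invr_ge0 ?(ltW H2_gt0) // ler_iXnr //.
  by rewrite invr_ge0 (ltW L_gt0).
rewrite ler_pdivrMr // -[L^-1]mulr1 ler_pdivrMl //.
exact: norm_ge1 (ltW delta_lt1).
Qed.

Unset Implicit Arguments.

Theorem mainTheorem7 (xi : algC) (n : nat) :
  quadratic_irrational xi -> (1 <= n)%N ->
  exists c : algC, 0 < c /\
    forall (alpha : algC) (p : {poly int}) (s : seq algC),
      min_poly_alg_int alpha p ->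
      size p = n.+2 ->
      size s = n.+1 ->
      map_poly intr p = \prod_(x <- s) ('X - x%:P) ->
      all (fun x => x != xi) s ->
      c / n.-root ((height p)%:R ^+ 2) <= \big[Num.max/0]_(i < n) `|xi - s`_i|.
Proof.
move=> xi_quad n_gt0.
have [S [Pr [A [[S_rat Pr_rat xi_root xi_irr] [A_int A_neq0 AS_int APr_int]]]]] :=
  quadratic_irrational_equation xi_quad.
set C := liouville_const xi (S - xi) A n.
have C_ge1 : 1 <= C by apply/liouville_const_ge1/norm_intr_ge1.
have Cn_ge1 : 1 <= C ^+ n.+1 by rewrite exprn_ege1.
exists (C ^+ n.+1)^-1; split; first by rewrite invr_gt0 (lt_le_trans ltr01).
move=> alpha p s [p_monic _] _ size_s p_roots s_neq_xi.
have [delta_ge0 delta_ub] :=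
  @bigmax_nonneg_ub algC n (fun i => `|xi - s`_i|) (fun i => normr_ge0 _).
apply: root_lower_bound => //; first by rewrite ler1n height_monic_ge1.
move=> delta_le1.
have norm_ge1 := norm_product_ge1 S_rat Pr_rat A_int A_neq0 AS_int APr_int xi_root xi_irr.
apply: le_trans (norm_ge1 s _ s_neq_xi) _.
  by rewrite -p_roots; apply/polyOverP => i; rewrite coef_map rpred_int.
have coef_le : `|(map_poly intr p)`_n| <= (height p)%:R :> algC.
  by rewrite coef_map -intr_norm -natr_absz ler_nat coef_le_height.
rewrite p_roots in coef_le.
apply: (@conj_product_le xi (S - xi) A n s _ (height p)%:R size_s) => //.
by rewrite ler1n height_monic_ge1.
Qed.
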